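(* Let $\mathcal S=(\mathcal P,\mathcal L)$ be a linear space with $v$ points, constant line size $k$ with $2<k<v$, and $r$ lines through each point; let $G\le\mathrm{Aut}(\mathcal S)$ be transitive on lines, and let $\mathfrak C$ be a non-trivial $G$-invariant partition of $\mathcal P$. If $\gcd(k,r)\le 8$, then $G$ is $2$-step imprimitive relative to $\mathfrak C$, that is, $\mathfrak C$ is both a minimal and a maximal non-trivial $G$-invariant partition of $\mathcal P$.
   Context: A linear space: a finite set $\mathcal P$ of points and a set $\mathcal L$ of subsets (lines) such that any two distinct points lie on exactly one line and each line has at least two points. A partition is non-trivial if it has more than one class and its classes have more than one element. $\mathfrak C$ is minimal if no non-trivial $G$-invariant partition strictly refines it, and maximal if no non-trivial $G$-invariant partition is strictly coarser than it. *)

From mathcomp Require Import all_boot all_order all_fingroup.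
Set Implicit Arguments. Unset Strict Implicit. Unset Printing Implicit Defensive.

Definition linear_space (P : finType) (L : {set {set P}}) : Prop :=
  (forall l, l \in L -> 2 <= #|l|) /\
  (forall x y : P, x != y -> exists! l, l \in L /\ x \in l /\ y \in l).

Definition is_aut (P : finType) (L : {set {set P}}) (g : {perm P}) : Prop :=
  [set (fun x : P => g x) @: l | l : {set P} in L] = L.

Definition line_transitive (P : finType) (L : {set {set P}})
  (G : {group {perm P}}) : Prop :=
  forall l1 l2, l1 \in L -> l2 \in L -> exists2 g : {perm P}, g \in G & (fun x : P => g x) @: l1 = l2.

Definition is_partition (P : finType) (C : {set {set P}}) : Prop :=
  partition C [set: P].

Definition G_invariant (P : finType) (G : {group {perm P}}) (C : {set {set P}}) : Prop :=
  forall g B, g \in G -> B \in C -> (fun x : P => g x) @: B \in C.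

Definition nontrivial_partition (P : finType) (C : {set {set P}}) : Prop :=
  is_partition C /\ 1 < #|C| /\ (forall B, B \in C -> 1 < #|B|).

Definition nontrivial_G_partition (P : finType) (G : {group {perm P}})
  (C : {set {set P}}) : Prop :=
  nontrivial_partition C /\ G_invariant G C.

Definition refines (P : finType) (D C : {set {set P}}) : Prop :=
  forall B, B \in D -> exists2 B', B' \in C & B \subset B'.

Definition minimal_G_partition (P : finType) (G : {group {perm P}})
  (C : {set {set P}}) : Prop :=
  ~ exists D, [/\ nontrivial_G_partition G D, refines D C & D != C].

Definition maximal_G_partition (P : finType) (G : {group {perm P}})
  (C : {set {set P}}) : Prop :=
  ~ exists D, [/\ nontrivial_G_partition G D, refines C D & D != C].

From mathcomp Require Import all_boot all_order all_fingroup.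
From mathcomp Require Import zify ring.
Set Implicit Arguments. Unset Strict Implicit. Unset Printing Implicit Defensive.

(* A line-transitive group is point-transitive here, so the classes of a
   G-invariant partition have a common size c.  Counting the ordered pairs of
   distinct points in a common class line by line gives (c - 1) k = x r with x
   even, i.e. c = 1 modulo a := 2r / gcd(k, 2r) (Delandtsheer-Doyen).  If a
   non-trivial invariant partition properly refined another one, then
   v = 1 + r(k - 1) would split as a product of three factors, all > 1 and
   = 1 (mod a).  Comparing v >= (1 + a)^3 with v < r^2 <= 64 a^2 leaves finitely
   many cases, which a computation rules out when gcd(k, r) <= 8. *)

(** * Arithmetic *)

Definition class_modulus (k r : nat) : nat := 2 * r %/ gcdn k (2 * r).

Lemma mul_class_modulus k r : k * class_modulus k r = lcmn k (2 * r).
Proof. by rewrite /class_modulus muln_divA ?dvdn_gcdr. Qed.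

Lemma class_size_mod k r c x :
  0 < k -> 0 < c -> (c - 1) * k = 2 * x * r -> c = 1 %[mod class_modulus k r].
Proof.
move=> k_gt0 c_gt0 ck; apply/eqP.
rewrite eqn_mod_dvd // -(dvdn_pmul2l k_gt0) mul_class_modulus.
by rewrite dvdn_lcm dvdn_mulr //= [k * _]mulnC ck mulnAC dvdn_mulr.
Qed.

Lemma mod1_split a c :
  0 < a -> 1 < c -> c = 1 %[mod a] -> exists2 t, 0 < t & c = 1 + a * t.
Proof.
move=> a_gt0 c_gt1 /eqP; rewrite eqn_mod_dvd ?(ltnW c_gt1) // => /dvdnP[t ct].
by exists t; lia.
Qed.

Lemma mod1_mulIr d x y : x = 1 %[mod d] -> x * y = 1 %[mod d] -> y = 1 %[mod d].
Proof. by move=> x1 <-; rewrite -modnMml x1 modnMml mul1n. Qed.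

(* With c_i = 1 + a t_i, e = gcd(k, 2r) and a = 2r / e, the equation
   c_1 c_2 c_3 = 1 + r (k - 1) reads a S = r (k - 1) for the polynomial S below,
   so that r = e a / 2 and k = 1 + 2 S / e are determined by (a, e, t_i). *)
Definition counterexample_data (a e t1 t2 t3 : nat) : bool :=
  let s := 2 * (t1 + t2 + t3 + a * (t1 * t2 + t1 * t3 + t2 * t3)
                + a * a * (t1 * t2 * t3)) in
  let k := (s %/ e).+1 in
  let r := (e * a)./2 in
  [&& e %| s, ~~ odd (e * a), e %| k, k <= r & gcdn k r <= 8].

Definition small_cases_checked : bool :=
  all (fun a => all (fun t1 => all (fun t2 => all (fun t3 =>
    all (fun e => ~~ counterexample_data a e t1 t2 t3) (iota 1 16))
  (iota 1 (63 %/ (a * t1 * t2)))) (iota 1 (63 %/ (a * t1)))) (iota 1 (63 %/ a)))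
  (iota 2 62).

Lemma no_small_counterexample a e t1 t2 t3 :
  1 < a -> 0 < t1 -> 0 < t2 -> 0 < t3 -> a * t1 * t2 * t3 <= 63 -> 0 < e <= 16 ->
  ~~ counterexample_data a e t1 t2 t3.
Proof.
move=> a_gt1 t1_gt0 t2_gt0 t3_gt0 bound /andP[e_gt0 e_le16].
have bound2 : a * t1 * t2 <= 63 := leq_trans (leq_pmulr _ t3_gt0) bound.
have bound1 : a * t1 <= 63 := leq_trans (leq_pmulr _ t2_gt0) bound2.
have bound0 : a <= 63 := leq_trans (leq_pmulr _ t1_gt0) bound1.
have in_range m n : 0 < m -> 0 < n -> m * n <= 63 -> n \in iota 1 (63 %/ m).
  by move=> m_gt0 n_gt0 mn; rewrite mem_iota add1n ltnS leq_divRL // mulnC n_gt0.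
have at1_gt0 : 0 < a * t1 by rewrite muln_gt0 t1_gt0 ltnW.
have at12_gt0 : 0 < a * t1 * t2 by rewrite muln_gt0 at1_gt0.
have : small_cases_checked by vm_compute.
move=> /allP/(_ a); rewrite mem_iota a_gt1 ltnS bound0 => /(_ isT).
move=> /allP/(_ t1 (in_range _ _ (ltnW a_gt1) t1_gt0 bound1)).
move=> /allP/(_ t2 (in_range _ _ at1_gt0 t2_gt0 bound2)).
move=> /allP/(_ t3 (in_range _ _ at12_gt0 t3_gt0 bound)).
by move=> /allP/(_ e); rewrite mem_iota; apply; lia.
Qed.

Lemma no_three_factors_mod k r c1 c2 c3 :
  0 < k <= r -> gcdn k r <= 8 -> 1 < c1 -> 1 < c2 -> 1 < c3 ->
  c1 = 1 %[mod class_modulus k r] -> c2 = 1 %[mod class_modulus k r] ->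
  c3 = 1 %[mod class_modulus k r] ->
  c1 * c2 * c3 = 1 + r * (k - 1) -> False.
Proof.
move=> /andP[k_gt0 k_le_r] gcd_le8 c1_gt1 c2_gt1 c3_gt1 c1_mod c2_mod c3_mod v_eq.
set a := class_modulus k r in c1_mod c2_mod c3_mod.
set e := gcdn k (2 * r).
have e_gt0 : 0 < e by rewrite gcdn_gt0 k_gt0.
have ae : a * e = 2 * r by rewrite divnK ?dvdn_gcdr.
have e_le_k : e <= k by rewrite dvdn_leq ?dvdn_gcdl.
have e_le16 : e <= 16.
  have : e %| 2 * gcdn k r.
    by rewrite muln_gcdr dvdn_gcd dvdn_gcdr (dvdn_mull _ (dvdn_gcdl _ _)).
  by move/dvdn_leq; rewrite muln_gt0 gcdn_gt0 k_gt0 => /(_ isT); lia.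
have a_gt1 : 1 < a by rewrite -(leq_pmul2r e_gt0) ae; lia.
have a_gt0 := ltnW a_gt1.
have [t1 t1_gt0 c1_eq] := mod1_split a_gt0 c1_gt1 c1_mod.
have [t2 t2_gt0 c2_eq] := mod1_split a_gt0 c2_gt1 c2_mod.
have [t3 t3_gt0 c3_eq] := mod1_split a_gt0 c3_gt1 c3_mod.
set S := t1 + t2 + t3 + a * (t1 * t2 + t1 * t3 + t2 * t3) + a * a * (t1 * t2 * t3).
have aS : a * S = r * (k - 1).
  suff : 1 + a * S = 1 + r * (k - 1) by move/eqP; rewrite eqn_add2l => /eqP.
  by rewrite -v_eq c1_eq c2_eq c3_eq /S; ring.
have two_S : 2 * S = e * (k - 1).
  apply/eqP; rewrite -(eqn_pmul2l a_gt0); apply/eqP.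
  by rewrite mulnCA aS mulnA -ae -mulnA.
have bound : a * t1 * t2 * t3 <= 63.
  have r_le : r <= 8 * a.
    have : a * e <= a * 16 by rewrite leq_pmul2l.
    by rewrite ae; lia.
  have r_gt0 : 0 < r by lia.
  rewrite -ltnS -(ltn_pmul2l (_ : 0 < a * a)) ?muln_gt0 ?a_gt0 //.
  apply: (@leq_ltn_trans (a * S)).
    rewrite (_ : a * a * _ = a * (a * a * (t1 * t2 * t3))); last by ring.
    by rewrite leq_pmul2l // /S leq_addl.
  rewrite aS; apply: (@leq_trans (r * r)); first by rewrite ltn_pmul2l //; lia.
  by apply: leq_trans (leq_mul r_le r_le) _; rewrite mulnACA mulnC.
have : 0 < e <= 16 by rewrite e_gt0.
move/(no_small_counterexample a_gt1 t1_gt0 t2_gt0 t3_gt0 bound)/negP; apply.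
rewrite /counterexample_data -/S two_S mulKn // subn1 prednK //.
by rewrite [e * a]mulnC ae mul2n doubleK odd_double dvdn_mulr ?dvdn_gcdl ?k_le_r.
Qed.

Lemma no_nested_class_sizes k r c1 c2 c3 x1 x2 :
  0 < k <= r -> gcdn k r <= 8 -> 1 < c1 -> 1 < c2 -> 1 < c3 ->
  (c1 - 1) * k = 2 * x1 * r -> (c1 * c2 - 1) * k = 2 * x2 * r ->
  c1 * c2 * c3 = 1 + r * (k - 1) -> False.
Proof.
move=> k_bounds gcd_le8 c1_gt1 c2_gt1 c3_gt1 eq1 eq12 v_eq.
have k_gt0 : 0 < k by case/andP: k_bounds.
have c1_mod := class_size_mod k_gt0 (ltnW c1_gt1) eq1.
have c12_gt1 : 1 < c1 * c2 := leq_trans c1_gt1 (leq_pmulr _ (ltnW c2_gt1)).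
have c12_mod := class_size_mod k_gt0 (ltnW c12_gt1) eq12.
have v_mod : c1 * c2 * c3 = 1 %[mod class_modulus k r].
  rewrite v_eq; apply: (class_size_mod (x := 'C(k, 2)) k_gt0 (leq_addr _ _)).
  by rewrite addKn -mul_bin_diag bin1 subn1; ring.
apply: (no_three_factors_mod k_bounds gcd_le8 c1_gt1 c2_gt1 c3_gt1 c1_mod).
- exact: mod1_mulIr c1_mod c12_mod.
- exact: mod1_mulIr c12_mod v_mod.
- exact: v_eq.
Qed.

(** * Counting *)

Lemma card_set_pred (T : finType) (A : {set T}) (p : pred T) :
  #|[set x in A | p x]| = \sum_(x in A) p x.
Proof.
rewrite -sum1_card (eq_bigl (fun x => (x \in A) && p x)) ?big_mkcondr /=.
  by apply: eq_bigr => x _; case: (p x).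
by move=> x; rewrite inE.
Qed.

Lemma double_count (T U : finType) (A : {set T}) (B : {set U}) (R : T -> U -> bool) :
  \sum_(x in A) #|[set y in B | R x y]| = \sum_(y in B) #|[set x in A | R x y]|.
Proof.
under eq_bigr do rewrite card_set_pred.
by rewrite exchange_big; under [RHS]eq_bigr do rewrite card_set_pred.
Qed.

Lemma even_card_sym (T : finType) (S : {set T * T}) :
  {in S, forall p, (p.2, p.1) \in S} -> {in S, forall p, p.1 != p.2} ->
  ~~ odd #|S|.
Proof.
move=> S_sym S_irr; pose swap (p : T * T) := (p.2, p.1).
pose S1 := [set p in S | enum_rank p.1 < enum_rank p.2].
have swap_inj : injective swap by move=> [? ?] [? ?] [-> ->].
have swap_S1 : swap @: S1 = S :\: S1.
  apply/setP => -[x y]; rewrite [in RHS]inE; apply/imsetP/andP => [[[x' y']]|].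
    rewrite !inE => /andP[xy'_S lt] [-> ->]; split; last exact: S_sym xy'_S.
    by rewrite (S_sym _ xy'_S) /= -leqNgt ltnW.
  rewrite inE => -[xyNS1 xy_S]; rewrite xy_S /= -leqNgt in xyNS1.
  exists (y, x) => //; rewrite inE (S_sym _ xy_S) ltn_neqAle xyNS1 andbT /=.
  by rewrite (inj_eq val_inj) (inj_eq enum_rank_inj) eq_sym; apply: S_irr xy_S.
have S1_sub : S1 \subset S by apply/subsetP => p; rewrite inE => /andP[].
by rewrite -(cardsID S1 S) (setIidPr S1_sub) -swap_S1 card_imset // addnn odd_double.
Qed.

Definition pairs_on (P : finType) (Q : {set P * P}) (l : {set P}) : {set P * P} :=
  [set p in Q | (p.1 \in l) && (p.2 \in l)].

Definition same_class_pairs (P : finType) (F : {set {set P}}) : {set P * P} :=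
  [set p : P * P | (p.1 != p.2) && (p.2 \in pblock F p.1)].

Section Partition.

Variables (T : finType) (F : {set {set T}}).
Hypothesis pF : is_partition F.

Lemma mem_pblockT x : x \in pblock F x.
Proof. by rewrite mem_pblock (cover_partition pF) inE. Qed.

Lemma pblockT_mem x : pblock F x \in F.
Proof. by rewrite pblock_mem // (cover_partition pF) inE. Qed.

Variable H : {set {set T}}.
Hypotheses (pH : is_partition H) (FH : refines F H).

Lemma refines_classes_partition B' :
  B' \in H -> partition [set B in F | B \subset B'] B'.
Proof.
have tiH := partition_trivIset pH.
move=> B'H; apply/and3P; split.
- apply/eqP/setP => y; apply/bigcupP/idP => [[B /setIdP[_ /subsetP]] | yB']; first exact.
  have [B'' B''H sub] := FH (pblockT_mem y).
  have yB'' := subsetP sub y (mem_pblockT y).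
  exists (pblock F y); last exact: mem_pblockT.
  by rewrite inE pblockT_mem -(def_pblock tiH B'H yB') (def_pblock tiH B''H yB'').
- by apply: trivIsetS (partition_trivIset pF); apply/subsetP => B /setIdP[].
- by rewrite inE (partition0 pF).
Qed.

Lemma refines_eq c :
  {in F, forall B : {set T}, #|B| = c} -> {in H, forall B : {set T}, #|B| = c} -> F = H.
Proof.
move=> Fc Hc; have tiH := partition_trivIset pH.
have FsubH : F \subset H.
  apply/subsetP => B BF; have [B' B'H BB'] := FH BF.
  suff -> : B = B' by [].
  by apply/eqP; rewrite eqEcard BB' (Fc B) // (Hc B') /=.
apply/eqP; rewrite eqEsubset FsubH; apply/subsetP => B' B'H.
have /set0Pn[y yB'] := partition_neq0 pH B'H.
have yH := subsetP FsubH _ (pblockT_mem y).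
by rewrite -(def_pblock tiH B'H yB') (def_pblock tiH yH (mem_pblockT y)) pblockT_mem.
Qed.

End Partition.

(** * Line-transitive linear spaces *)

Section LinearSpace.

Variables (P : finType) (L : {set {set P}}).
Hypothesis LS : linear_space L.

Lemma card_lines_through2 x y :
  x != y -> #|[set l in L | (x \in l) && (y \in l)]| = 1.
Proof.
case: LS => _ /[apply] -[l [[lL [xl yl]] l_uniq]].
apply/eqP/cards1P; exists l; apply/setP => m; rewrite !inE.
by apply/andP/eqP => [[mL /andP[xm ym]] | ->]; [exact/esym/l_uniq | rewrite lL xl yl].
Qed.

Lemma card_pairs_by_lines (Q : {set P * P}) :
  {in Q, forall p, p.1 != p.2} -> #|Q| = \sum_(l in L) #|pairs_on Q l|.
Proof.
move=> Q_irr; rewrite -sum1_card.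
rewrite -(double_count Q L (fun p l => (p.1 \in l) && (p.2 \in l))).
by apply: eq_bigr => p /Q_irr/card_lines_through2.
Qed.

Lemma card_by_lines_through y (A : {set P}) :
  y \notin A -> #|A| = \sum_(l in [set l in L | y \in l]) #|l :&: A|.
Proof.
move=> yNA; rewrite -sum1_card.
transitivity (\sum_(a in A) #|[set l in [set l in L | y \in l] | a \in l]|).
  apply: eq_bigr => a aA; have ya : y != a by apply: contraNneq yNA => ->.
  by rewrite -(card_lines_through2 ya); apply: eq_card => l; rewrite !inE andbA.
by rewrite double_count; apply: eq_bigr => l _; apply: eq_card => a; rewrite !inE andbC.
Qed.

Lemma card_meet_le1 l1 l2 : l1 \in L -> l2 \in L -> l1 != l2 -> #|l1 :&: l2| <= 1.
Proof.
move=> l1L l2L; apply: contraNleq.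
move=> /card_gt1P[x [y [/setIP[xl1 xl2] /setIP[yl1 yl2] xy]]].
case: LS => _ /(_ x y xy) [l [_ l_uniq]].
by rewrite -(l_uniq l1) ?(l_uniq l2).
Qed.

Lemma card_flags (A : {set P}) :
  \sum_(x in A) #|[set l in L | x \in l]| = \sum_(l in L) #|l :&: A|.
Proof.
by rewrite double_count; apply: eq_bigr => l _; apply: eq_card => x; rewrite !inE andbC.
Qed.

Variables k r : nat.
Hypotheses (Lk : {in L, forall l : {set P}, #|l| = k})
           (Lr : forall x, #|[set l in L | x \in l]| = r)
           (k_gt2 : 2 < k) (k_lt_v : k < #|P|).

Let v_gt0 : 0 < #|P| := leq_ltn_trans (leq0n k) k_lt_v.

Lemma card_points_lines : #|P| * r = #|L| * k.
Proof.
rewrite -cardsT -sum_nat_const -(eq_bigr _ (fun x _ => Lr x)) card_flags.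
by rewrite -sum_nat_const; apply: eq_bigr => l /Lk; rewrite setIT.
Qed.

Lemma card_points : #|P| = 1 + r * (k - 1).
Proof.
have /card_gt0P[x _] := v_gt0.
have := card_by_lines_through (_ : x \notin [set~ x]); rewrite !inE eqxx => /(_ isT).
rewrite cardsC1 (eq_bigr (fun _ => k - 1)) ?sum_nat_const ?Lr; last first.
  by move=> l /setIdP[/Lk <- xl]; rewrite -setDE (cardsD1 x l) xl add1n subn1.
by move=> <-; rewrite add1n prednK.
Qed.

Lemma exists_antiflag : exists l x, l \in L /\ x \notin l.
Proof.
have /card_gt1P[x0 [y0 [_ _ xy]]] := ltn_trans (ltnW k_gt2) k_lt_v.
case: LS => _ /(_ x0 y0 xy) [l [[lL _] _]]; exists l.
have /subsetPn[x _ xNl] : ~~ ([set: P] \subset l).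
  by apply: contraTN k_lt_v => /subset_leq_card; rewrite cardsT Lk // leqNgt.
by exists x.
Qed.

Lemma k_le_r : k <= r.
Proof.
have [l [x [lL xNl]]] := exists_antiflag.
rewrite -(Lk lL) (card_by_lines_through xNl) -(Lr x) -sum1_card.
apply: leq_sum => m /setIdP[mL xm]; apply: card_meet_le1 => //.
by apply: contraNneq xNl => <-.
Qed.

Variable G : {group {perm P}}.
Hypothesis LT : line_transitive L G.

Lemma line_transitive_card_eq (T : finType) (X : {set P} -> {set T}) :
  (forall g l, g \in G -> #|X l| <= #|X [set g x | x in l]|) ->
  {in L &, forall l1 l2, #|X l1| = #|X l2|}.
Proof.
move=> X_le l1 l2 l1L l2L.
have [g gG gl1] := LT l1L l2L; have [h hG hl2] := LT l2L l1L.
apply/eqP; rewrite eqn_leq; apply/andP.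
by split; [rewrite -gl1 | rewrite -hl2]; apply: X_le.
Qed.

Lemma card_meet_invariant (S : {set P}) :
  (forall g x, g \in G -> x \in S -> g x \in S) ->
  {in L &, forall l1 l2, #|l1 :&: S| = #|l2 :&: S|}.
Proof.
move=> S_inv; apply: line_transitive_card_eq => g l gG.
rewrite -(card_imset _ (@perm_inj _ g)); apply/subset_leq_card/subsetP.
by move=> _ /imsetP[x /setIP[xl xS] ->]; rewrite inE imset_f ?S_inv.
Qed.

Lemma card_pairs_on_invariant (Q : {set P * P}) :
  (forall g p, g \in G -> p \in Q -> (g p.1, g p.2) \in Q) ->
  {in L &, forall l1 l2, #|pairs_on Q l1| = #|pairs_on Q l2|}.
Proof.
move=> Q_inv; apply: line_transitive_card_eq => g l gG.
have g2_inj : injective (fun p : P * P => (g p.1, g p.2)).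
  by move=> [x1 y1] [x2 y2] /= [e1 e2]; rewrite (perm_inj e1) (perm_inj e2).
rewrite -(card_imset _ g2_inj); apply/subset_leq_card/subsetP.
by move=> _ /imsetP[p /setIdP[pQ /andP[p1l p2l]] ->]; rewrite inE Q_inv //= !imset_f.
Qed.

Lemma point_transitive x y : exists2 g : {perm P}, g \in G & g x = y.
Proof.
pose O := [set (g : {perm P}) x | g in G].
have /imsetP[g gG ->] : y \in O; last by exists g.
apply: contraT => yNO.
have O_inv g z : g \in G -> z \in O -> g z \in O.
  by move=> gG /imsetP[h hG ->]; rewrite -permM imset_f ?groupM.
have [l0 [_ [l0L _]]] := exists_antiflag.
have O_meet : {in L, forall l, #|l :&: O| = #|l0 :&: O|}.
  by move=> l lL; apply: card_meet_invariant.
have O_r : #|O| = r * #|l0 :&: O|.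
  rewrite (card_by_lines_through yNO) (eq_bigr (fun=> #|l0 :&: O|)).
    by rewrite sum_nat_const Lr.
  by move=> l /setIdP[/O_meet].
have O_b : #|O| * r = #|L| * #|l0 :&: O|.
  rewrite -sum_nat_const -(eq_bigr _ (fun z _ => Lr z)) card_flags -sum_nat_const.
  exact: eq_bigr.
have m_gt0 : 0 < #|l0 :&: O|.
  have xO : x \in O by rewrite -[x]perm1 imset_f.
  rewrite lt0n; apply: contraTneq xO => m0.
  by have /eqP := O_r; rewrite m0 muln0 cards_eq0 => /eqP ->; rewrite inE.
have b_eq : #|L| = r * r.
  by apply/eqP; rewrite -(eqn_pmul2r m_gt0) -O_b O_r mulnAC.
have := card_points_lines; rewrite card_points b_eq.
have := k_le_r; nia.
Qed.

Section InvariantPartition.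

Variable F : {set {set P}}.
Hypotheses (pF : is_partition F) (iF : G_invariant G F).

Lemma pblock_perm g x : g \in G -> pblock F (g x) = [set g z | z in pblock F x].
Proof.
move=> gG; apply: def_pblock (partition_trivIset pF) (iF gG (pblockT_mem pF x)) _.
exact/imset_f/mem_pblockT.
Qed.

Lemma card_class_uniform x0 : {in F, forall B : {set P}, #|B| = #|pblock F x0|}.
Proof.
move=> B BF; have /set0Pn[y yB] := partition_neq0 pF BF.
have [g gG gx0] := point_transitive x0 y.
rewrite -(def_pblock (partition_trivIset pF) BF yB) -gx0 pblock_perm //.
by rewrite card_imset //; apply: perm_inj.
Qed.

Lemma card_same_class_pairs c :
  {in F, forall B : {set P}, #|B| = c} -> #|same_class_pairs F| = #|P| * (c - 1).
Proof.
move=> Fc; have pair_inj (x : P) : injective (@pair P P x) by move=> a b [].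
have fiber x : #|[set p in same_class_pairs F | x == p.1]| = c - 1.
  rewrite -(Fc _ (pblockT_mem pF x)) (cardsD1 x) mem_pblockT // add1n subn1 /=.
  rewrite -(card_imset _ (pair_inj x)); apply: eq_card => -[a b]; rewrite !inE /=.
  apply/andP/imsetP => [[/andP[ab b_a] /eqP xa] | [y yB [-> ->]]].
    by subst x; exists b; rewrite // !inE eq_sym ab.
  by move: yB; rewrite !inE eqxx eq_sym => /andP[-> ->].
transitivity (\sum_(p in same_class_pairs F) #|[set x in [set: P] | x == p.1]|).
  rewrite -sum1_card; apply: eq_bigr => p _; apply/esym/eqP/cards1P.
  by exists p.1; apply/setP => x; rewrite !inE.
rewrite -(double_count [set: P] _ (fun x p => x == p.1)) -cardsT -sum_nat_const.
by apply: eq_bigr => x _; apply: fiber.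
Qed.

Lemma same_class_pairs_sym p :
  p \in same_class_pairs F -> (p.2, p.1) \in same_class_pairs F.
Proof.
case: p => a b; rewrite !inE /= eq_sym => /andP[-> b_a].
by rewrite (same_pblock (partition_trivIset pF) b_a) mem_pblockT.
Qed.

Lemma same_class_pairs_perm g p : g \in G ->
  p \in same_class_pairs F -> (g p.1, g p.2) \in same_class_pairs F.
Proof.
move=> gG; case: p => a b; rewrite !inE /= (inj_eq perm_inj) pblock_perm //.
by move=> /andP[-> b_a]; apply: imset_f.
Qed.

Lemma class_size_equation c :
  {in F, forall B : {set P}, #|B| = c} -> exists x, (c - 1) * k = 2 * x * r.
Proof.
move=> Fc; have [l0 [_ [l0L _]]] := exists_antiflag.
set Q := same_class_pairs F; set X := #|pairs_on Q l0|.
have Q_lines : #|Q| = #|L| * X.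
  rewrite card_pairs_by_lines; last by move=> [a b]; rewrite inE => /andP[].
  rewrite -sum_nat_const; apply: eq_bigr => l lL.
  by apply: card_pairs_on_invariant => // g p; apply: same_class_pairs_perm.
have X_even : ~~ odd X.
  apply: even_card_sym => -[a b] /setIdP[abQ /andP[al bl]].
    by rewrite inE same_class_pairs_sym //= bl al.
  by move: abQ; rewrite inE => /andP[].
exists X./2; rewrite mul2n even_halfK //.
apply/eqP; rewrite -(eqn_pmul2l v_gt0); apply/eqP.
rewrite mulnA -(card_same_class_pairs Fc) Q_lines mulnAC -card_points_lines.
by rewrite mulnAC mulnA.
Qed.

End InvariantPartition.

Lemma no_proper_refinement F H :
  nontrivial_G_partition G F -> nontrivial_G_partition G H ->
  refines F H -> F != H -> gcdn k r <= 8 -> False.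
Proof.
move=> [[pF [_ F_gt1]] iF] [[pH [H_card_gt1 H_gt1]] iH] FH FneH gcd_le8.
have /card_gt0P[x0 _] := v_gt0.
set cF := #|pblock F x0|; set B' := pblock H x0.
set m := #|[set B in F | B \subset B']|.
have FcF := card_class_uniform pF iF x0; have HcH := card_class_uniform pH iH x0.
have cH_eq : #|B'| = m * cF.
  apply: card_uniform_partition (refines_classes_partition pF pH FH (pblockT_mem pH x0)).
  by move=> B /setIdP[/FcF].
have v_eq : #|P| = cF * m * #|H|.
  by rewrite -cardsT (card_uniform_partition HcH pH) -/B' cH_eq mulnC [m * _]mulnC.
have cF_gt1 : 1 < cF := F_gt1 _ (pblockT_mem pF x0).
have m_gt1 : 1 < m.
  have m_gt0 : 0 < m.
    rewrite lt0n; apply: contraTneq (H_gt1 _ (pblockT_mem pH x0)) => m0.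
    by rewrite -/B' cH_eq m0.
  rewrite ltn_neqAle m_gt0 andbT; apply: contra_neq FneH => m1.
  by apply: (refines_eq pF pH FH FcF) => B /HcH ->; rewrite -/B' cH_eq -m1 mul1n.
have [xF eqF] := class_size_equation pF iF FcF.
have [xH eqH] := class_size_equation pH iH HcH; rewrite -/B' cH_eq [m * _]mulnC in eqH.
apply: (no_nested_class_sizes _ gcd_le8 cF_gt1 m_gt1 H_card_gt1 eqF eqH).
  by rewrite k_le_r (ltnW (ltnW k_gt2)).
by rewrite -v_eq card_points.
Qed.

End LinearSpace.

Theorem theorem4p11 (P : finType) (L : {set {set P}}) (k r : nat)
  (G : {group {perm P}}) (C : {set {set P}}) :
  linear_space L ->
  (forall l, l \in L -> #|l| = k) ->
  2 < k -> k < #|P| ->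
  (forall x : P, #|[set l in L | x \in l]| = r) ->
  (forall g, g \in G -> is_aut L g) ->
  line_transitive L G ->
  nontrivial_G_partition G C ->
  gcdn k r <= 8 ->
  minimal_G_partition G C /\ maximal_G_partition G C.
Proof.
move=> LS Lk k_gt2 k_lt_v Lr _ LT C_nt gcd_le8.
have no_ref := no_proper_refinement LS Lk Lr k_gt2 k_lt_v LT.
split=> -[D [D_nt D_ref D_neq]].
  exact: no_ref D_nt C_nt D_ref D_neq gcd_le8.
by apply: no_ref C_nt D_nt D_ref _ gcd_le8; rewrite eq_sym.
Qed.
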